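(* The satisfiability problem is undecidable for the class of formulas $\Phi_1 \wedge \Phi_2$, where $\Phi_1$ is a prenex formula of linear integer arithmetic with quantifier prefix in $\exists^*\forall^*$ and $\Phi_2$ is a prenex formula of linear integer arithmetic with quantifier prefix in $\forall^*\exists^*$, both over the signature of linear integer arithmetic extended with a single monadic predicate symbol $P$, where $P$ is required to be interpreted as a finite set of integers.
   Context: Linear integer arithmetic ($\mathsf{LIA}$) has the sort $\mathsf{Int}$ interpreted as the integers, the predicate $\geq$, addition $+$, and constants $0,1$, with their standard interpretation, and no uninterpreted function symbols. Formulas may have free variables (interpreted as integers); a formula is satisfiable if some assignment of integers to its free variables and some finite set of integers interpreting $P$ make it true. *)

From Stdlib Require Import ZArith List Arith.
Import ListNotations.

Inductive term : Type :=
| TVar  (x : nat)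
| TZero
| TOne
| TAdd  (s t : term).

Inductive form : Type :=
| FGe   (s t : term)
| FEq   (s t : term)
| FP    (t : term)
| FTrue
| FFalse
| FNot  (p : form)
| FAnd  (p q : form)
| FOr   (p q : form)
| FImp  (p q : form)
| FEx   (x : nat) (p : form)
| FAll  (x : nat) (p : form).

Definition update (rho : nat -> Z) (x : nat) (z : Z) : nat -> Z :=
  fun y => if Nat.eqb y x then z else rho y.

Fixpoint eval_term (rho : nat -> Z) (t : term) : Z :=
  match t with
  | TVar x => rho x
  | TZero => 0%Z
  | TOne => 1%Z
  | TAdd s u => (eval_term rho s + eval_term rho u)%Z
  end.

Fixpoint holds (P : list Z) (rho : nat -> Z) (p : form) : Prop :=
  match p with
  | FGe s t => (eval_term rho s >= eval_term rho t)%Z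
  | FEq s t => eval_term rho s = eval_term rho t
  | FP t => In (eval_term rho t) P
  | FTrue => True
  | FFalse => False
  | FNot q => ~ holds P rho q
  | FAnd q r => holds P rho q /\ holds P rho r
  | FOr q r => holds P rho q \/ holds P rho r
  | FImp q r => holds P rho q -> holds P rho r
  | FEx x q => exists z : Z, holds P (update rho x z) q
  | FAll x q => forall z : Z, holds P (update rho x z) q
  end.

Definition sat (p : form) : Prop :=
  exists (rho : nat -> Z) (P : list Z), holds P rho p.

Fixpoint qfree (p : form) : Prop :=
  match p with
  | FNot q => qfree q
  | FAnd q r | FOr q r | FImp q r => qfree q /\ qfree r
  | FEx _ _ | FAll _ _ => False
  | _ => True
  end.

Inductive prefix_A : form -> Prop :=
| pA_qf p : qfree p -> prefix_A p
| pA_all x p : prefix_A p -> prefix_A (FAll x p).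

Inductive prefix_E : form -> Prop :=
| pE_qf p : qfree p -> prefix_E p
| pE_ex x p : prefix_E p -> prefix_E (FEx x p).

Inductive prefix_EA : form -> Prop :=
| pEA_A p : prefix_A p -> prefix_EA p
| pEA_ex x p : prefix_EA p -> prefix_EA (FEx x p).

Inductive prefix_AE : form -> Prop :=
| pAE_E p : prefix_E p -> prefix_AE p
| pAE_all x p : prefix_AE p -> prefix_AE (FAll x p).

Definition in_class (p : form) : Prop :=
  exists p1 p2, p = FAnd p1 p2 /\ prefix_EA p1 /\ prefix_AE p2.

Definition cpair (a b : nat) : nat := (a + b) * (a + b + 1) / 2 + b.

Fixpoint code_term (t : term) : nat :=
  match t with
  | TVar x => cpair 0 x
  | TZero => cpair 1 0
  | TOne => cpair 2 0
  | TAdd s u => cpair 3 (cpair (code_term s) (code_term u))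
  end.

Fixpoint code_form (p : form) : nat :=
  match p with
  | FGe s t => cpair 0 (cpair (code_term s) (code_term t))
  | FEq s t => cpair 1 (cpair (code_term s) (code_term t))
  | FP t => cpair 2 (code_term t)
  | FTrue => cpair 3 0
  | FFalse => cpair 4 0
  | FNot q => cpair 5 (code_form q)
  | FAnd q r => cpair 6 (cpair (code_form q) (code_form r))
  | FOr q r => cpair 7 (cpair (code_form q) (code_form r))
  | FImp q r => cpair 8 (cpair (code_form q) (code_form r))
  | FEx x q => cpair 9 (cpair x (code_form q))
  | FAll x q => cpair 10 (cpair x (code_form q))
  end.

Inductive recf : Type :=
| RZero
| RSucc
| RProj (i : nat)
| RComp (f : recf) (gs : list recf)
| RPrim (f g : recf)           (* primitive recursion on first argument *)
| RMu   (f : recf).            (* unbounded minimisation on first argument *)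

Inductive reval : recf -> list nat -> nat -> Prop :=
| ev_zero v : reval RZero v 0
| ev_succ x v : reval RSucc (x :: v) (S x)
| ev_proj i v : i < length v -> reval (RProj i) v (nth i v 0)
| ev_comp f gs v ys z :
    revals gs v ys -> reval f ys z -> reval (RComp f gs) v z
| ev_prim0 f g v y : reval f v y -> reval (RPrim f g) (0 :: v) y
| ev_primS f g n v r y :
    reval (RPrim f g) (n :: v) r -> reval g (n :: r :: v) y ->
    reval (RPrim f g) (S n :: v) y
| ev_mu f v n :
    reval f (n :: v) 0 ->
    (forall m, m < n -> exists k, reval f (m :: v) (S k)) ->
    reval (RMu f) v n
with revals : list recf -> list nat -> list nat -> Prop :=
| evs_nil v : revals [] v []
| evs_cons g gs v y ys :
    reval g v y -> revals gs v ys -> revals (g :: gs) v (y :: ys).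

(* A finite set [P] of integers can store the run of a mu-recursive program [g].  A record
   "the call [c] (a subprogram of [g] with its arity) maps [v] to [y]", stored at address [u],
   consists of the points [M u + t St], [M (u + y) + t St + 1] and [M (u + v_j) + t St + 2 + j],
   where [t] numbers [c] in the closed table of subcalls of [g].  The forall-exists formula
   [run_form g] says that a record of [g] on the input [x1] with value 0 sits at address [x2],
   and that every record is justified by records of its premises at smaller addresses.
   Soundness is an induction on addresses; conversely, a derivation of [g x = 0], listed with
   premises after conclusions, placed at decreasing addresses is a model.  So
   [(x1 = x) /\ run_form g] is satisfiable iff [g x = 0]; its exists-forall conjunct is even
   quantifier-free.  A decider [f] for the class is then
   refuted by diagonalisation: for [d := f o (code th |-> code ((x1 = code th) /\ th))] and
   [th := run_form d], the formula [F := (x1 = code th) /\ th] is satisfiable iff [d (code th) = 0]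
   iff [f (code F) = 0] iff [F] is unsatisfiable. *)

From Stdlib Require Import ZArith List Lia Arith FunctionalExtensionality Classical.
Import ListNotations.

(** * Mu-recursive programs *)

Fixpoint reval_functional g v y (H : reval g v y) {struct H} :
  forall y', reval g v y' -> y = y'
with revals_functional gs v ys (H : revals gs v ys) {struct H} :
  forall ys', revals gs v ys' -> ys = ys'.
Proof.
  - destruct H as [v|x v|i v Hi|f gs v ys z Hs Hf|f g v y Hf|f g n v r y Hr Hg|f v n H0 Hm];
      intros y' H'; inversion H'; subst; auto.
    + match goal with K : revals _ _ _ |- _ => pose proof (revals_functional _ _ _ Hs _ K) end.
      subst; eauto.
    + eauto.
    + match goal with K : reval (RPrim _ _) _ _ |- _ => pose proof (reval_functional _ _ _ Hr _ K) end.
      subst; eauto.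
    + destruct (Nat.lt_trichotomy n y') as [Hlt|[Heq|Hgt]]; auto.
      * match goal with K : forall m, m < y' -> _ |- _ => destruct (K n Hlt) as [k Hk] end.
        pose proof (reval_functional _ _ _ H0 _ Hk). discriminate.
      * destruct (Hm y' Hgt) as [k Hk].
        match goal with K : reval f (y' :: v) 0 |- _ => pose proof (reval_functional _ _ _ Hk _ K) end.
        discriminate.
  - destruct H as [v|g gs v y ys Hg Hgs]; intros ys' H'; inversion H'; subst; auto.
    f_equal; eauto.
Qed.

Lemma reval_comp1 f g v y z : reval g v y -> reval f [y] z -> reval (RComp f [g]) v z.
Proof. intros Hg Hf. econstructor; [repeat econstructor; exact Hg | exact Hf]. Qed.

Lemma reval_comp2 f g1 g2 v y1 y2 z :
  reval g1 v y1 -> reval g2 v y2 -> reval f [y1; y2] z -> reval (RComp f [g1; g2]) v z.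
Proof. intros H1 H2 Hf. econstructor; [repeat econstructor; eauto | exact Hf]. Qed.

Lemma reval_proj_nth i v y : i < length v -> nth i v 0 = y -> reval (RProj i) v y.
Proof. intros Hi <-. exact (ev_proj i v Hi). Qed.

Ltac reval_proj := apply reval_proj_nth; [simpl; lia | reflexivity].

Fixpoint rconst (k : nat) : recf :=
  match k with 0 => RZero | S k => RComp RSucc [rconst k] end.

Lemma reval_rconst k v : reval (rconst k) v k.
Proof. induction k; simpl; [constructor | eapply reval_comp1; [eauto | constructor]]. Qed.

Definition radd : recf := RPrim (RProj 0) (RComp RSucc [RProj 1]).

Lemma reval_radd a b : reval radd [a; b] (a + b).
Proof.
  induction a; simpl; [constructor; reval_proj |].
  econstructor; [eauto | eapply reval_comp1; [reval_proj | constructor]].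
Qed.

Fixpoint triangle n := match n with 0 => 0 | S m => triangle m + S m end.

Lemma triangle_spec s : s * (s + 1) / 2 = triangle s.
Proof.
  assert (E : triangle s * 2 = s * (s + 1)) by (induction s; simpl; lia).
  rewrite <- E. apply Nat.div_mul. lia.
Qed.

Definition rtriangle : recf := RPrim RZero (RComp radd [RProj 1; RComp RSucc [RProj 0]]).

Lemma reval_rtriangle n : reval rtriangle [n] (triangle n).
Proof.
  induction n; simpl; [repeat constructor |].
  econstructor; [eauto |].
  eapply reval_comp2; [reval_proj | eapply reval_comp1; [reval_proj | constructor] | apply reval_radd].
Qed.

Definition rcpair : recf := RComp radd [RComp rtriangle [RComp radd [RProj 0; RProj 1]]; RProj 1].

Lemma reval_rcpair a b v : reval rcpair (a :: b :: v) (cpair a b).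
Proof.
  unfold cpair. rewrite triangle_spec.
  eapply reval_comp2; [| reval_proj | apply reval_radd].
  eapply reval_comp1; [| apply reval_rtriangle].
  eapply reval_comp2; [reval_proj | reval_proj | apply reval_radd].
Qed.

Fixpoint num (n : nat) : term := match n with 0 => TZero | S n => TAdd (num n) TOne end.

Definition rcode_num : recf :=
  RPrim (rconst (cpair 1 0)) (RComp rcpair [rconst 3; RComp rcpair [RProj 1; rconst (cpair 2 0)]]).

Lemma reval_rcode_num n : reval rcode_num [n] (code_term (num n)).
Proof.
  induction n; simpl; [constructor; apply reval_rconst |].
  econstructor; [eauto |].
  eapply reval_comp2; [apply reval_rconst | | apply reval_rcpair].
  eapply reval_comp2; [reval_proj | apply reval_rconst | apply reval_rcpair].
Qed.

Definition pin_input (x : nat) (th : form) : form := FAnd (FEq (TVar 1) (num x)) th.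

Definition rcode_pin : recf :=
  RComp rcpair [rconst 6; RComp rcpair
    [RComp rcpair [rconst 1; RComp rcpair [rconst (cpair 0 1); rcode_num]]; RProj 0]].

Lemma reval_rcode_pin th : reval rcode_pin [code_form th] (code_form (pin_input (code_form th) th)).
Proof.
  eapply reval_comp2; [apply reval_rconst | | apply reval_rcpair].
  eapply reval_comp2; [| reval_proj | apply reval_rcpair].
  eapply reval_comp2; [apply reval_rconst | | apply reval_rcpair].
  eapply reval_comp2; [apply reval_rconst | apply reval_rcode_num | apply reval_rcpair].
Qed.

(** * Closed tables of calls *)

Definition recf_eq_dec : forall a b : recf, {a = b} + {a <> b}.
Proof.
  fix IH 1. decide equality; [apply Nat.eq_dec | apply (list_eq_dec IH)].
Defined.

Definition call_eq_dec : forall p q : recf * nat, {p = q} + {p <> q}.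
Proof. decide equality; [apply Nat.eq_dec | apply recf_eq_dec]. Defined.

Definition recf_ind_nested (P : recf -> Prop) (HZ : P RZero) (HS : P RSucc)
  (HP : forall i, P (RProj i))
  (HC : forall f gs, P f -> Forall P gs -> P (RComp f gs))
  (HR : forall f g, P f -> P g -> P (RPrim f g)) (HM : forall f, P f -> P (RMu f)) :
  forall r, P r :=
  fix F r := match r with
  | RZero => HZ | RSucc => HS | RProj i => HP i
  | RComp f gs => HC f gs (F f)
      ((fix G l := match l return Forall P l with
                   | [] => Forall_nil _ | x :: l => Forall_cons _ (F x) (G l) end) gs)
  | RPrim f g => HR f g (F f) (F g)
  | RMu f => HM f (F f) end.

Fixpoint subcalls (g : recf) (k : nat) : list (recf * nat) :=
  (g, k) :: match g with
  | RComp f gs => subcalls f (length gs) ++ flat_map (fun h => subcalls h k) gs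
  | RPrim f h => subcalls f (k - 1) ++ subcalls h (S k)
  | RMu f => subcalls f (S k)
  | _ => []
  end.

Definition children (c : recf * nat) : list (recf * nat) :=
  let (g, k) := c in
  match g with
  | RComp f gs => (f, length gs) :: map (fun h => (h, k)) gs
  | RPrim f h => [(f, k - 1); (h, S k)]
  | RMu f => [(f, S k)]
  | _ => []
  end.

Definition closed_calls (T : list (recf * nat)) : Prop :=
  forall c d, In c T -> In d (children c) -> In d T.

Lemma subcalls_self g k : In (g, k) (subcalls g k).
Proof. destruct g; left; reflexivity. Qed.

Lemma subcalls_children g k d :
  In d (children (g, k)) -> incl (subcalls (fst d) (snd d)) (subcalls g k).
Proof.
  intros Hd e He. destruct g as [| |i|f gs|f h|f]; simpl in Hd; try contradiction; right.
  - destruct Hd as [<-|Hd]; apply in_or_app; [left; exact He | right].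
    apply in_map_iff in Hd as (h & <- & Hh). apply in_flat_map. exists h. auto.
  - destruct Hd as [<-|[<-|[]]]; apply in_or_app; auto.
  - destruct Hd as [<-|[]]. exact He.
Qed.

Lemma subcalls_trans g k c : In c (subcalls g k) -> incl (subcalls (fst c) (snd c)) (subcalls g k).
Proof.
  revert k. induction g as [| |i|f gs IHf IHgs|f h IHf IHh|f IHf] using recf_ind_nested;
    intros k Hc; simpl in Hc; destruct Hc as [<-|Hc]; try apply incl_refl; try contradiction.
  - apply in_app_or in Hc as [Hc|Hc].
    + eapply incl_tran; [apply (IHf _ Hc) |]. apply (subcalls_children _ k (f, length gs)). left; auto.
    + apply in_flat_map in Hc as (h & Hh & Hc). rewrite Forall_forall in IHgs.
      eapply incl_tran; [apply (IHgs h Hh _ Hc) |]. apply (subcalls_children _ k (h, k)).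
      right. apply in_map_iff. exists h. auto.
  - apply in_app_or in Hc as [Hc|Hc].
    + eapply incl_tran; [apply (IHf _ Hc) |]. apply (subcalls_children _ k (f, k - 1)). left; auto.
    + eapply incl_tran; [apply (IHh _ Hc) |]. apply (subcalls_children _ k (h, S k)). right; left; auto.
  - eapply incl_tran; [apply (IHf _ Hc) |]. apply (subcalls_children _ k (f, S k)). left; auto.
Qed.

Lemma subcalls_closed g k : closed_calls (subcalls g k).
Proof.
  intros [g' k'] d Hc Hd. apply (subcalls_trans g k _ Hc).
  apply (subcalls_children g' k' d Hd). destruct d. apply subcalls_self.
Qed.

Fixpoint call_index (c : recf * nat) (T : list (recf * nat)) : nat :=
  match T with
  | [] => 0
  | d :: T => if call_eq_dec c d then 0 else S (call_index c T)
  end.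

Lemma call_index_head c T : call_index c (c :: T) = 0.
Proof. simpl. destruct (call_eq_dec c c); congruence. Qed.

Lemma call_index_subcalls_self g k : call_index (g, k) (subcalls g k) = 0.
Proof. destruct g; apply call_index_head. Qed.

Lemma nth_call_index c T : In c T -> call_index c T < length T /\ nth (call_index c T) T (RZero, 0) = c.
Proof.
  induction T as [|d T IH]; simpl; [tauto |].
  destruct (call_eq_dec c d) as [->|Hne]; [simpl; split; [lia | reflexivity] |].
  intros [->|Hc]; [congruence |]. destruct (IH Hc). simpl; split; [lia | assumption].
Qed.

Lemma call_index_inj c d T : In c T -> In d T -> call_index c T = call_index d T -> c = d.
Proof.
  intros Hc Hd E. rewrite <- (proj2 (nth_call_index c T Hc)), <- (proj2 (nth_call_index d T Hd)), E.
  reflexivity.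
Qed.

Definition width (T : list (recf * nat)) : nat := 2 + list_max (map snd T).

Lemma width_bound T c : In c T -> snd c + 2 <= width T.
Proof.
  intros Hc. unfold width.
  pose proof (proj1 (list_max_le (map snd T) _) (le_n _)) as Hmax. rewrite Forall_forall in Hmax.
  specialize (Hmax _ (in_map snd T c Hc)). lia.
Qed.

Definition fits (St : nat) (c : recf * nat) : Prop :=
  snd c + 2 <= St /\ match fst c with RComp _ gs => length gs + 2 <= St | _ => True end.

Lemma closed_fits T c : closed_calls T -> In c T -> fits (width T) c.
Proof.
  intros Hcl Hc. split; [apply width_bound, Hc |].
  destruct c as [[| |i|f gs|f h|f] k]; simpl; auto.
  apply (width_bound T (f, length gs)), (Hcl _ _ Hc). left; reflexivity.
Qed.

(** * Records of calls in a finite set of integers *)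

Definition cons_fun {X} (h : X) (A : nat -> X) (j : nat) : X :=
  match j with 0 => h | S j => A j end.

Definition shift {X} (A : nat -> X) (j : nat) : X := A (S j).

Definition agree_below {X} (n : nat) (A A' : nat -> X) : Prop := forall j, j < n -> A j = A' j.

Lemma agree_below_sym {X} n (A A' : nat -> X) : agree_below n A A' -> agree_below n A' A.
Proof. intros H j Hj. symmetry. auto. Qed.

Lemma agree_below_le {X} n n' (A A' : nat -> X) : n <= n' -> agree_below n' A A' -> agree_below n A A'.
Proof. intros Hn H j Hj. apply H. lia. Qed.

Lemma agree_below_cons {X} n h (A A' : nat -> X) :
  agree_below n A A' -> agree_below (S n) (cons_fun h A) (cons_fun h A').
Proof. intros H [|j] Hj; [reflexivity | apply H; lia]. Qed.

Lemma agree_below_shift {X} n (A A' : nat -> X) :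
  agree_below (S n) A A' -> agree_below n (shift A) (shift A').
Proof. intros H j Hj. apply H. lia. Qed.

Fixpoint mul_term (n : nat) (t : term) : term :=
  match n with 0 => TZero | S n => TAdd t (mul_term n t) end.

Definition slot_term (M : nat) (u : term) (r : nat) : term := TAdd (mul_term M u) (num r).

Definition le_form (a b : term) : form := FGe b a.

Definition lt_form (a b : term) : form := FGe b (TAdd a TOne).

Definition conj_list (l : list form) : form := fold_right FAnd FTrue l.

Definition conj_upto (F : nat -> form) (n : nat) : form := conj_list (map F (seq 0 n)).

(* Bounding stored values by variable 0 is what lets the intended model rule out every spurious
   reading of its points as a record (see [record_readback]). *)
Definition cell_form M r u a : form :=
  FAnd (le_form TZero a) (FAnd (lt_form a (TVar 0)) (FP (slot_term M (TAdd u a) r))).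

Definition record_form M St t u k (A : nat -> term) y : form :=
  FAnd (FAnd (le_form TZero u) (FP (slot_term M u (t * St))))
       (FAnd (cell_form M (t * St + 1) u y)
             (conj_upto (fun j => cell_form M (t * St + 2 + j) u (A j)) k)).

Definition cell (P : list Z) (G : Z) M r (u a : Z) : Prop :=
  (0 <= a < G /\ In (Z.of_nat M * (u + a) + Z.of_nat r) P)%Z.

Definition record P G M St t (u : Z) k (A : nat -> Z) (y : Z) : Prop :=
  ((0 <= u)%Z /\ In (Z.of_nat M * u + Z.of_nat (t * St))%Z P) /\ cell P G M (t * St + 1) u y /\
  (forall j, j < k -> cell P G M (t * St + 2 + j) u (A j)).

Lemma eval_num rho n : eval_term rho (num n) = Z.of_nat n.
Proof. induction n; simpl; [reflexivity | rewrite IHn; lia]. Qed.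

Lemma eval_slot_term rho M u r :
  eval_term rho (slot_term M u r) = (Z.of_nat M * eval_term rho u + Z.of_nat r)%Z.
Proof.
  unfold slot_term. cbn [eval_term]. rewrite eval_num. f_equal.
  induction M; simpl mul_term; cbn [eval_term]; [lia | rewrite IHM; lia].
Qed.

Lemma eval_cons_fun rho h (A : nat -> term) :
  (fun j => eval_term rho (cons_fun h A j)) = cons_fun (eval_term rho h) (fun j => eval_term rho (A j)).
Proof. apply functional_extensionality. intros [|j]; reflexivity. Qed.

Lemma holds_le_form P rho a b : holds P rho (le_form a b) <-> (eval_term rho a <= eval_term rho b)%Z.
Proof. unfold le_form. cbn [holds]. lia. Qed.

Lemma holds_lt_form P rho a b : holds P rho (lt_form a b) <-> (eval_term rho a < eval_term rho b)%Z.
Proof. unfold lt_form. cbn [holds eval_term]. lia. Qed.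

Lemma holds_conj_list P rho l : holds P rho (conj_list l) <-> forall p, In p l -> holds P rho p.
Proof.
  induction l as [|p l IH]; simpl; [split; tauto |]. rewrite IH.
  split; [intros [Hp Hl] q [<-|Hq]; auto | intros H; split; [apply H; left |]; auto].
Qed.

Lemma holds_conj_map {X} P rho (F : X -> form) l :
  holds P rho (conj_list (map F l)) <-> forall x, In x l -> holds P rho (F x).
Proof.
  rewrite holds_conj_list. setoid_rewrite in_map_iff.
  split; [intros H x Hx; apply H; eauto | intros H p (x & <- & Hx); auto].
Qed.

Lemma holds_conj_upto P rho F n : holds P rho (conj_upto F n) <-> forall j, j < n -> holds P rho (F j).
Proof.
  unfold conj_upto. rewrite holds_conj_list.
  setoid_rewrite in_map_iff. setoid_rewrite in_seq.
  split; [intros H j Hj; apply H; exists j; split; [reflexivity | lia] |].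
  intros H p (j & <- & Hj). apply H. lia.
Qed.

Lemma holds_cell_form P rho M r u a :
  holds P rho (cell_form M r u a) <-> cell P (rho 0) M r (eval_term rho u) (eval_term rho a).
Proof.
  unfold cell_form, cell. cbn [holds]. rewrite holds_le_form, holds_lt_form, eval_slot_term.
  cbn [eval_term]. tauto.
Qed.

Lemma holds_record_form P rho M St t u k A y :
  holds P rho (record_form M St t u k A y) <->
  record P (rho 0) M St t (eval_term rho u) k (fun j => eval_term rho (A j)) (eval_term rho y).
Proof.
  unfold record_form, record. cbn [holds].
  rewrite holds_conj_upto, holds_cell_form, holds_le_form, eval_slot_term.
  setoid_rewrite holds_cell_form. reflexivity.
Qed.

Lemma record_ext P G M St t u k A A' y :
  agree_below k A A' -> record P G M St t u k A y -> record P G M St t u k A' y.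
Proof.
  intros E (H1 & H2 & H3). split; [exact H1 | split; [exact H2 |]]. intros j Hj. rewrite <- E; auto.
Qed.

Lemma record_nonneg P G M St t u k A y :
  record P G M St t u k A y -> (0 <= u)%Z /\ (0 <= y)%Z /\ forall j, j < k -> (0 <= A j)%Z.
Proof.
  unfold record, cell. intros ((Hu & _) & (Hy & _) & HA).
  split; [exact Hu | split; [lia |]]. intros j Hj. destruct (HA j Hj). lia.
Qed.

(* Premises live at addresses below [u], which makes soundness an induction on addresses.  In
   [run_form], [m] is universally quantified: this expresses the minimality required by [RMu]. *)
Definition step_form M St T (c : recf * nat) (u y m n r : term) (A W V : nat -> term) : form :=
  let rec d := record_form M St (call_index d T) in
  let (g, k) := c in
  match g with
  | RZero => FEq y TZero
  | RSucc => if k =? 0 then FFalse else FEq y (TAdd (A 0) TOne)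
  | RProj i => if i <? k then FEq y (A i) else FFalse
  | RComp f gs =>
      FAnd (conj_upto (fun j => FAnd (lt_form (W j) u) (rec (nth j gs RZero, k) (W j) k A (V j)))
              (length gs))
           (FAnd (lt_form (W (length gs)) u) (rec (f, length gs) (W (length gs)) (length gs) V y))
  | RPrim f h => if k =? 0 then FFalse else
      FOr (FAnd (FEq (A 0) TZero)
             (FAnd (lt_form (W 0) u) (rec (f, k - 1) (W 0) (k - 1) (shift A) y)))
          (FAnd (FEq (A 0) (TAdd n TOne))
             (FAnd (lt_form (W 0) u)
               (FAnd (rec (RPrim f h, k) (W 0) k (cons_fun n (shift A)) r)
                 (FAnd (lt_form (W 1) u)
                   (rec (h, S k) (W 1) (S k) (cons_fun n (cons_fun r (shift A))) y)))))
  | RMu f =>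
      FAnd (FAnd (lt_form (W 0) u) (rec (f, S k) (W 0) (S k) (cons_fun y A) TZero))
           (FImp (FAnd (le_form TZero m) (lt_form m y))
              (FAnd (lt_form (W 1) u)
                 (FAnd (le_form TOne (V 0)) (rec (f, S k) (W 1) (S k) (cons_fun m A) (V 0)))))
  end.

Definition step_ok P G M St T (c : recf * nat) (u y m n r : Z) (A W V : nat -> Z) : Prop :=
  let rec d := record P G M St (call_index d T) in
  let (g, k) := c in
  match g with
  | RZero => y = 0%Z
  | RSucc => if k =? 0 then False else y = (A 0%nat + 1)%Z
  | RProj i => if i <? k then y = A i else False
  | RComp f gs =>
      (forall j, j < length gs -> (W j < u)%Z /\ rec (nth j gs RZero, k) (W j) k A (V j)) /\
      (W (length gs) < u)%Z /\ rec (f, length gs) (W (length gs)) (length gs) V y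
  | RPrim f h => if k =? 0 then False else
      (A 0%nat = 0%Z /\ (W 0%nat < u)%Z /\ rec (f, k - 1) (W 0%nat) (k - 1) (shift A) y) \/
      (A 0%nat = (n + 1)%Z /\ (W 0%nat < u)%Z /\
       rec (RPrim f h, k) (W 0%nat) k (cons_fun n (shift A)) r /\
       (W 1%nat < u)%Z /\ rec (h, S k) (W 1%nat) (S k) (cons_fun n (cons_fun r (shift A))) y)
  | RMu f =>
      ((W 0%nat < u)%Z /\ rec (f, S k) (W 0%nat) (S k) (cons_fun y A) 0%Z) /\
      ((0 <= m)%Z /\ (m < y)%Z ->
       (W 1%nat < u)%Z /\ (1 <= V 0%nat)%Z /\ rec (f, S k) (W 1%nat) (S k) (cons_fun m A) (V 0%nat))
  end.

Lemma holds_step_form P rho M St T c u y m n r A W V :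
  holds P rho (step_form M St T c u y m n r A W V) <->
  step_ok P (rho 0) M St T c (eval_term rho u) (eval_term rho y) (eval_term rho m)
    (eval_term rho n) (eval_term rho r) (fun j => eval_term rho (A j))
    (fun j => eval_term rho (W j)) (fun j => eval_term rho (V j)).
Proof.
  destruct c as [g k]. unfold step_form, step_ok.
  destruct g as [| |i|f gs|f h|f]; cbn [holds eval_term];
    repeat match goal with |- context [if ?b then _ else _] => destruct b end;
    cbn [holds eval_term]; rewrite ?holds_conj_upto; cbn [holds eval_term];
    repeat setoid_rewrite holds_record_form; repeat setoid_rewrite holds_lt_form;
    repeat setoid_rewrite holds_le_form; rewrite ?eval_cons_fun; cbn [eval_term];
    reflexivity.
Qed.

Lemma step_ok_ext P G M St T c u y m n r A A' W W' V V' :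
  fits St c -> agree_below St A A' -> agree_below St W W' -> agree_below St V V' ->
  step_ok P G M St T c u y m n r A W V -> step_ok P G M St T c u y m n r A' W' V'.
Proof.
  destruct c as [g k]. intros [Hk Hg] HA HW HV. simpl in Hk, Hg.
  assert (HAk : agree_below (S k) A A') by (apply (agree_below_le _ St); [lia | exact HA]).
  unfold step_ok. destruct g as [| |i|f gs|f h|f]; auto.
  - destruct (k =? 0); [auto |]. rewrite (HAk 0) by lia. auto.
  - destruct (Nat.ltb_spec i k); [rewrite (HAk i) by lia |]; auto.
  - rewrite (HW (length gs)) by lia. intros (Hgs & Hw & Hf). split; [| split; [exact Hw |]].
    + intros j Hj. rewrite <- (HW j), <- (HV j) by lia. destruct (Hgs j Hj) as [Hwj Hrec].
      split; [exact Hwj |]. eapply record_ext; [| exact Hrec].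
      apply (agree_below_le _ (S k)); [lia | exact HAk].
    + eapply record_ext; [| exact Hf]. intros j Hj. apply HV. lia.
  - destruct (k =? 0); [auto |]. rewrite <- (HAk 0), <- (HW 0), <- (HW 1) by lia.
    pose proof (agree_below_shift k A A' HAk) as Hsh.
    intros [(H0 & Hw & Hf)|(H0 & Hw & Hr & Hw1 & Hh)]; [left | right].
    + refine (conj H0 (conj Hw _)). eapply record_ext; [| exact Hf].
      apply (agree_below_le _ k); [lia | exact Hsh].
    + refine (conj H0 (conj Hw (conj _ (conj Hw1 _)))).
      * eapply record_ext; [| exact Hr].
        apply (agree_below_le _ (S k)); [lia | apply agree_below_cons, Hsh].
      * eapply record_ext; [| exact Hh].
        apply (agree_below_le _ (S (S k))); [lia | apply agree_below_cons, agree_below_cons, Hsh].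
  - rewrite <- (HW 0), <- (HW 1), <- (HV 0) by lia.
    pose proof (fun h => agree_below_cons k h A A' (agree_below_le k St A A' ltac:(lia) HA)) as Hc.
    intros [[Hw Hf] Hm]. split; [split; [exact Hw | eapply record_ext; [apply Hc | exact Hf]] |].
    intros Hm'. destruct (Hm Hm') as (Hw1 & Hv & Hf1).
    refine (conj Hw1 (conj Hv _)). eapply record_ext; [apply Hc | exact Hf1].
Qed.

Definition override (xs : list nat) (f rho : nat -> Z) : nat -> Z :=
  fun x => if in_dec Nat.eq_dec x xs then f x else rho x.

Definition alls (xs : list nat) (p : form) : form := fold_right FAll p xs.

Definition exs (xs : list nat) (p : form) : form := fold_right FEx p xs.

Lemma override_in xs f rho x : In x xs -> override xs f rho x = f x.
Proof. unfold override. destruct (in_dec Nat.eq_dec x xs); tauto. Qed.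

Lemma override_out xs f rho x : ~ In x xs -> override xs f rho x = rho x.
Proof. unfold override. destruct (in_dec Nat.eq_dec x xs); tauto. Qed.

Lemma override_nil f rho : override [] f rho = rho.
Proof. apply functional_extensionality. intros x. apply override_out. auto. Qed.

Lemma override_update xs x f z rho :
  override xs f (update rho x z) =
  override (x :: xs) (fun y => if in_dec Nat.eq_dec y xs then f y else z) rho.
Proof.
  apply functional_extensionality. intros y. unfold override, update.
  destruct (in_dec Nat.eq_dec y xs), (in_dec Nat.eq_dec y (x :: xs)) as [Hy|Hy];
    simpl in Hy; destruct (Nat.eqb_spec y x); subst; intuition congruence.
Qed.

Lemma override_cons xs x f rho : override xs f (update rho x (f x)) = override (x :: xs) f rho.
Proof.
  rewrite override_update. apply functional_extensionality. intros y. unfold override.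
  destruct (in_dec Nat.eq_dec y (x :: xs)) as [[<-|Hy]|]; [| |reflexivity];
    destruct (in_dec Nat.eq_dec _ xs); tauto.
Qed.

Lemma holds_alls P xs :
  forall rho p, holds P rho (alls xs p) <-> forall f, holds P (override xs f rho) p.
Proof.
  induction xs as [|x xs IH]; intros rho p; simpl.
  - setoid_rewrite override_nil. split; [auto | intros H; exact (H rho)].
  - split.
    + intros H f. rewrite <- override_cons. apply IH, H.
    + intros H z. apply IH. intros f. rewrite override_update. apply H.
Qed.

Lemma holds_exs P xs :
  forall rho p, holds P rho (exs xs p) <-> exists f, holds P (override xs f rho) p.
Proof.
  induction xs as [|x xs IH]; intros rho p; simpl.
  - setoid_rewrite override_nil. split; [intros H; exists rho; exact H | intros [_ H]; exact H].
  - split.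
    + intros [z H]. apply IH in H as [f H]. rewrite override_update in H. eauto.
    + intros [f H]. exists (f x). apply IH. exists f. rewrite override_cons. exact H.
Qed.

(* Variables 0, 1, 2 stay free: the value bound, the input and the address of the top record.
   The universal ones are 3, 4, 5 and [arg_var j]: address, value, mu-candidate and arguments of
   a record.  The existential ones are 6, 7, [addr_var j] and [val_var j]: predecessor and
   recursive value for [RPrim], then addresses and values of the premises. *)
Definition arg_var (j : nat) : nat := 8 + 3 * j.

Definition addr_var (j : nat) : nat := 9 + 3 * j.

Definition val_var (j : nat) : nat := 10 + 3 * j.

Definition univ_vars (St : nat) : list nat := [3; 4; 5] ++ map arg_var (seq 0 St).

Definition exist_vars (St : nat) : list nat :=
  [6; 7] ++ map addr_var (seq 0 St) ++ map val_var (seq 0 St).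

Definition top_form M St : form := record_form M St 0 (TVar 2) 1 (fun _ => TVar 1) TZero.

Definition step_clause M St T (c : recf * nat) : form :=
  FImp (record_form M St (call_index c T) (TVar 3) (snd c) (fun j => TVar (arg_var j)) (TVar 4))
       (step_form M St T c (TVar 3) (TVar 4) (TVar 5) (TVar 6) (TVar 7)
          (fun j => TVar (arg_var j)) (fun j => TVar (addr_var j)) (fun j => TVar (val_var j))).

Definition run_matrix M St T : form :=
  FAnd (top_form M St) (conj_list (map (step_clause M St T) T)).

Definition run_form (g : recf) : form :=
  let T := subcalls g 1 in
  let St := width T in
  alls (univ_vars St) (exs (exist_vars St) (run_matrix (St * length T) St T)).

Definition steps_justified P G M St T : Prop :=
  forall u y m A, exists n r W V, forall c, In c T ->
    record P G M St (call_index c T) u (snd c) A y -> step_ok P G M St T c u y m n r A W V.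

Lemma qfree_conj_list l : Forall qfree l -> qfree (conj_list l).
Proof. induction 1; simpl; auto. Qed.

Lemma qfree_conj_upto F n : (forall j, qfree (F j)) -> qfree (conj_upto F n).
Proof.
  intros H. apply qfree_conj_list, Forall_forall. intros p Hp. apply in_map_iff in Hp as (j & <- & _).
  auto.
Qed.

Lemma qfree_record_form M St t u k A y : qfree (record_form M St t u k A y).
Proof. repeat split. apply qfree_conj_upto. simpl. auto. Qed.

Lemma qfree_step_form M St T c u y m n r A W V : qfree (step_form M St T c u y m n r A W V).
Proof.
  destruct c as [[| |i|f gs|f h|f] k]; unfold step_form;
    repeat match goal with |- context [if ?b then _ else _] => destruct b end;
    repeat first [ exact I
                 | match goal with |- qfree (record_form _ _ _ _ _ _ _) => apply qfree_record_form end
                 | match goal with |- qfree (conj_upto _ _) => apply qfree_conj_upto; intros j end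
                 | split ].
Qed.

Lemma qfree_run_matrix M St T : qfree (run_matrix M St T).
Proof.
  split; [apply qfree_record_form |].
  apply qfree_conj_list, Forall_forall. intros p Hp. apply in_map_iff in Hp as (c & <- & _).
  split; [apply qfree_record_form | apply qfree_step_form].
Qed.

Lemma prefix_AE_alls_exs xs ys p : qfree p -> prefix_AE (alls xs (exs ys p)).
Proof.
  intros Hp. induction xs as [|x xs IH]; [| apply pAE_all, IH]. apply pAE_E.
  induction ys as [|y ys IH]; [apply pE_qf, Hp | apply pE_ex, IH].
Qed.

Lemma prefix_AE_run_form g : prefix_AE (run_form g).
Proof. apply prefix_AE_alls_exs, qfree_run_matrix. Qed.

Lemma pin_input_in_class x g : in_class (pin_input x (run_form g)).
Proof.
  exists (FEq (TVar 1) (num x)), (run_form g).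
  split; [reflexivity | split; [repeat constructor | apply prefix_AE_run_form]].
Qed.

Lemma in_univ_vars St x :
  In x (univ_vars St) <-> x = 3 \/ x = 4 \/ x = 5 \/ exists j, j < St /\ x = arg_var j.
Proof.
  unfold univ_vars. rewrite in_app_iff, in_map_iff. setoid_rewrite in_seq. simpl.
  split; intros H; repeat destruct H as [H|H]; subst; firstorder lia.
Qed.

Lemma in_exist_vars St x :
  In x (exist_vars St) <-> x = 6 \/ x = 7 \/ exists j, j < St /\ (x = addr_var j \/ x = val_var j).
Proof.
  unfold exist_vars. rewrite !in_app_iff, !in_map_iff. setoid_rewrite in_seq. simpl.
  split; intros H; repeat destruct H as [H|H]; subst; firstorder lia.
Qed.

Definition env St (fA gE rho : nat -> Z) : nat -> Z :=
  override (exist_vars St) gE (override (univ_vars St) fA rho).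

Lemma env_free St fA gE rho x : x <= 2 -> env St fA gE rho x = rho x.
Proof.
  intros Hx. unfold env. rewrite !override_out; [reflexivity | |].
  - rewrite in_univ_vars. unfold arg_var. firstorder lia.
  - rewrite in_exist_vars. unfold addr_var, val_var. firstorder lia.
Qed.

Lemma env_univ St fA gE rho x : In x (univ_vars St) -> env St fA gE rho x = fA x.
Proof.
  intros Hx. unfold env. rewrite override_out, override_in; [reflexivity | exact Hx |].
  rewrite in_univ_vars in Hx. rewrite in_exist_vars. unfold arg_var, addr_var, val_var in *.
  firstorder lia.
Qed.

Lemma env_exist St fA gE rho x : In x (exist_vars St) -> env St fA gE rho x = gE x.
Proof. apply override_in. Qed.

Definition univ_assign (u y m : Z) (A : nat -> Z) : nat -> Z :=
  fun x => match x with 3 => u | 4 => y | 5 => m | _ => A ((x - 8) / 3) end.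

Definition exist_assign (n r : Z) (W V : nat -> Z) : nat -> Z :=
  fun x => match x with
           | 6 => n | 7 => r
           | _ => if (x - 9) mod 3 =? 0 then W ((x - 9) / 3) else V ((x - 10) / 3)
           end.

Lemma univ_assign_arg u y m A j : univ_assign u y m A (arg_var j) = A j.
Proof.
  unfold arg_var. change (univ_assign u y m A (8 + 3 * j)) with (A ((8 + 3 * j - 8) / 3)).
  f_equal. replace (8 + 3 * j - 8) with (j * 3) by lia. apply Nat.div_mul. lia.
Qed.

Lemma exist_assign_addr n r W V j : exist_assign n r W V (addr_var j) = W j.
Proof.
  unfold addr_var. change (exist_assign n r W V (9 + 3 * j)) with
    (if (9 + 3 * j - 9) mod 3 =? 0 then W ((9 + 3 * j - 9) / 3) else V ((9 + 3 * j - 10) / 3)).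
  replace (9 + 3 * j - 9) with (j * 3) by lia.
  rewrite Nat.Div0.mod_mul, Nat.div_mul by lia. reflexivity.
Qed.

Lemma exist_assign_val n r W V j : exist_assign n r W V (val_var j) = V j.
Proof.
  unfold val_var. change (exist_assign n r W V (10 + 3 * j)) with
    (if (10 + 3 * j - 9) mod 3 =? 0 then W ((10 + 3 * j - 9) / 3) else V ((10 + 3 * j - 10) / 3)).
  replace (10 + 3 * j - 9) with (1 + j * 3) by lia. rewrite Nat.Div0.mod_add.
  replace (10 + 3 * j - 10) with (j * 3) by lia. rewrite Nat.div_mul by lia. reflexivity.
Qed.

Lemma env_univ_assign St u y m A gE rho :
  env St (univ_assign u y m A) gE rho 3 = u /\ env St (univ_assign u y m A) gE rho 4 = y /\
  env St (univ_assign u y m A) gE rho 5 = m /\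
  agree_below St (fun j => env St (univ_assign u y m A) gE rho (arg_var j)) A.
Proof.
  repeat split; [apply env_univ, in_univ_vars; auto.. |].
  intros j Hj. rewrite env_univ, univ_assign_arg; [reflexivity |]. apply in_univ_vars. eauto 6.
Qed.

Lemma env_exist_assign St fA n r W V rho :
  env St fA (exist_assign n r W V) rho 6 = n /\ env St fA (exist_assign n r W V) rho 7 = r /\
  agree_below St (fun j => env St fA (exist_assign n r W V) rho (addr_var j)) W /\
  agree_below St (fun j => env St fA (exist_assign n r W V) rho (val_var j)) V.
Proof.
  repeat split; [apply env_exist, in_exist_vars; auto.. | |];
    intros j Hj; rewrite env_exist by (apply in_exist_vars; eauto 6).
  - apply exist_assign_addr.
  - apply exist_assign_val.
Qed.

Lemma env_top P St fA gE rho M :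
  record P (env St fA gE rho 0) M St 0 (env St fA gE rho 2) 1 (fun _ => env St fA gE rho 1) 0 <->
  record P (rho 0) M St 0 (rho 2) 1 (fun _ => rho 1) 0.
Proof. rewrite !env_free by lia. reflexivity. Qed.

Lemma holds_run_matrix P rho M St T :
  holds P rho (run_matrix M St T) <->
  record P (rho 0) M St 0 (rho 2) 1 (fun _ => rho 1) 0 /\
  forall c, In c T ->
    record P (rho 0) M St (call_index c T) (rho 3) (snd c) (fun j => rho (arg_var j)) (rho 4) ->
    step_ok P (rho 0) M St T c (rho 3) (rho 4) (rho 5) (rho 6) (rho 7)
      (fun j => rho (arg_var j)) (fun j => rho (addr_var j)) (fun j => rho (val_var j)).
Proof.
  unfold run_matrix, top_form. cbn [holds]. rewrite holds_record_form, holds_conj_map.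
  unfold step_clause. cbn [holds eval_term].
  setoid_rewrite holds_record_form. setoid_rewrite holds_step_form. reflexivity.
Qed.

Lemma holds_quantified_matrix P rho T St :
  (forall c, In c T -> fits St c) ->
  holds P rho (alls (univ_vars St) (exs (exist_vars St) (run_matrix (St * length T) St T))) <->
  record P (rho 0) (St * length T) St 0 (rho 2) 1 (fun _ => rho 1) 0 /\
  steps_justified P (rho 0) (St * length T) St T.
Proof.
  intros Hfit. rewrite holds_alls. setoid_rewrite holds_exs.
  change (override (exist_vars St) ?gE (override (univ_vars St) ?fA rho)) with (env St fA gE rho).
  setoid_rewrite holds_run_matrix. setoid_rewrite env_top.
  assert (E0 : forall fA gE, env St fA gE rho 0 = rho 0) by (intros; apply env_free; lia).
  split.
  - intros H. split; [destruct (H (fun _ => 0%Z)) as [gE [Htop _]]; exact Htop |].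
    intros u y m A. destruct (H (univ_assign u y m A)) as [gE [_ Hsteps]].
    destruct (env_univ_assign St u y m A gE rho) as (E3 & E4 & E5 & EA).
    exists (env St (univ_assign u y m A) gE rho 6), (env St (univ_assign u y m A) gE rho 7),
      (fun j => env St (univ_assign u y m A) gE rho (addr_var j)),
      (fun j => env St (univ_assign u y m A) gE rho (val_var j)).
    intros c Hc Hrec. specialize (Hsteps c Hc). rewrite E0, E3, E4, E5 in Hsteps.
    eapply step_ok_ext; [apply Hfit, Hc | exact EA | intros j _; reflexivity.. |].
    apply Hsteps. eapply record_ext; [| exact Hrec].
    apply (agree_below_le _ St); [pose proof (proj1 (Hfit c Hc)); lia | apply agree_below_sym, EA].
  - intros [Htop Hsteps] fA.
    destruct (Hsteps (fA 3) (fA 4) (fA 5) (fun j => fA (arg_var j))) as (n & r & W & V & Hs).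
    exists (exist_assign n r W V). split; [exact Htop |].
    destruct (env_exist_assign St fA n r W V rho) as (E6 & E7 & EW & EV).
    assert (EA : agree_below St (fun j => env St fA (exist_assign n r W V) rho (arg_var j))
                   (fun j => fA (arg_var j)))
      by (intros j Hj; apply env_univ, in_univ_vars; eauto 6).
    assert (Eu : forall x, 3 <= x <= 5 -> env St fA (exist_assign n r W V) rho x = fA x)
      by (intros x Hx; apply env_univ, in_univ_vars; lia).
    intros c Hc Hrec. rewrite E0, E6, E7, !Eu in * by lia.
    eapply step_ok_ext; [apply Hfit, Hc | apply agree_below_sym; eassumption.. |].
    apply (Hs c Hc). eapply record_ext; [| exact Hrec].
    apply (agree_below_le _ St); [pose proof (proj1 (Hfit c Hc)); lia | exact EA].
Qed.

Lemma holds_run_form P rho g :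
  holds P rho (run_form g) <->
  record P (rho 0) (width (subcalls g 1) * length (subcalls g 1)) (width (subcalls g 1)) 0
    (rho 2) 1 (fun _ => rho 1) 0 /\
  steps_justified P (rho 0) (width (subcalls g 1) * length (subcalls g 1)) (width (subcalls g 1))
    (subcalls g 1).
Proof. apply holds_quantified_matrix. intros c. apply closed_fits, subcalls_closed. Qed.

(** * Soundness *)

Definition args (A : nat -> Z) (k : nat) : list nat := map (fun j => Z.to_nat (A j)) (seq 0 k).

Lemma args_shift A k : args A (S k) = Z.to_nat (A 0%nat) :: args (shift A) k.
Proof. unfold args, shift. simpl. rewrite <- seq_shift, map_map. reflexivity. Qed.

Lemma args_cons_fun h A k : args (cons_fun h A) (S k) = Z.to_nat h :: args A k.
Proof. apply args_shift. Qed.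

Lemma length_args A k : length (args A k) = k.
Proof. unfold args. rewrite length_map, length_seq. reflexivity. Qed.

Lemma nth_args A k i : i < k -> nth i (args A k) 0 = Z.to_nat (A i).
Proof.
  intros Hi. unfold args.
  rewrite (nth_indep _ _ (Z.to_nat (A 0%nat))) by (rewrite length_map, length_seq; exact Hi).
  rewrite (map_nth (fun j => Z.to_nat (A j))), seq_nth by exact Hi. reflexivity.
Qed.

Lemma revals_nth gs v (F : nat -> nat) :
  (forall j, j < length gs -> reval (nth j gs RZero) v (F j)) -> revals gs v (map F (seq 0 (length gs))).
Proof.
  revert F. induction gs as [|h gs IH]; intros F H; simpl; constructor.
  - apply (H 0). simpl. lia.
  - rewrite <- seq_shift, map_map. apply IH. intros j Hj. apply (H (S j)). simpl. lia.
Qed.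

Section Soundness.

Variables (P : list Z) (G : Z) (M St : nat) (T : list (recf * nat)).

Hypothesis closed_T : closed_calls T.

Definition record_sound (c : recf * nat) (u : Z) (A : nat -> Z) (y : Z) : Prop :=
  record P G M St (call_index c T) u (snd c) A y -> reval (fst c) (args A (snd c)) (Z.to_nat y).

Definition sound_below (u : Z) : Prop :=
  forall c w A y, In c T -> (w < u)%Z -> record_sound c w A y.

Lemma mu_step_sound f k u y A :
  In (RMu f, k) T -> sound_below u ->
  (forall m, exists n r W V, step_ok P G M St T (RMu f, k) u y m n r A W V) ->
  reval (RMu f) (args A k) (Z.to_nat y).
Proof.
  intros Hc IH Hstep. pose proof (closed_T _ _ Hc (or_introl eq_refl)) as Hf.
  destruct (Hstep 0%Z) as (n & r & W & V & [[Hw Hrec] _]).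
  pose proof (IH (f, S k) _ _ _ Hf Hw Hrec) as R0. simpl in R0. rewrite args_cons_fun in R0.
  apply ev_mu; [exact R0 |].
  intros m Hm. destruct (Hstep (Z.of_nat m)) as (n' & r' & W' & V' & [_ Hok]).
  destruct Hok as (Hw1 & Hv & Hrec1); [lia |].
  pose proof (IH (f, S k) _ _ _ Hf Hw1 Hrec1) as R1. simpl in R1. rewrite args_cons_fun, Nat2Z.id in R1.
  exists (Z.to_nat (V' 0%nat) - 1).
  replace (S (Z.to_nat (V' 0%nat) - 1)) with (Z.to_nat (V' 0%nat)) by lia. exact R1.
Qed.

Lemma step_sound g k u y A :
  In (g, k) T -> record P G M St (call_index (g, k) T) u k A y -> sound_below u ->
  (forall m, exists n r W V, step_ok P G M St T (g, k) u y m n r A W V) ->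
  reval g (args A k) (Z.to_nat y).
Proof.
  intros Hc Hrec IH Hstep. destruct (record_nonneg _ _ _ _ _ _ _ _ _ Hrec) as (_ & Hy & HA).
  destruct (Hstep 0%Z) as (n & r & W & V & Hok). unfold step_ok in Hok.
  destruct g as [| |i|f gs|f h|f].
  - subst. constructor.
  - destruct k as [|k]; [contradiction |]. simpl in Hok. rewrite args_shift.
    replace (Z.to_nat y) with (S (Z.to_nat (A 0%nat))) by (specialize (HA 0 ltac:(lia)); lia).
    constructor.
  - destruct (Nat.ltb_spec i k); [subst | contradiction].
    rewrite <- nth_args with (k := k) by assumption. constructor. rewrite length_args. assumption.
  - destruct Hok as (Hgs & Hw & Hf). apply ev_comp with (ys := args V (length gs)).
    + apply revals_nth. intros j Hj. destruct (Hgs j Hj) as [Hwj Hj'].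
      apply (IH (nth j gs RZero, k) _ _ _ (closed_T _ _ Hc (or_intror (in_map _ _ _ (nth_In _ _ Hj))))
               Hwj Hj').
    + exact (IH (f, length gs) _ _ _ (closed_T _ _ Hc (or_introl eq_refl)) Hw Hf).
  - destruct k as [|k]; [contradiction |]. rewrite args_shift. simpl in Hok.
    destruct Hok as [(H0 & Hw & Hf)|(H0 & Hw & Hr & Hw1 & Hh)].
    + rewrite H0. constructor. rewrite Nat.sub_0_r in Hf.
      exact (IH (f, k) _ _ _ (closed_T _ _ Hc (or_introl (f_equal _ (Nat.sub_0_r k)))) Hw Hf).
    + destruct (record_nonneg _ _ _ _ _ _ _ _ _ Hr) as (_ & Hr0 & Hn0).
      replace (Z.to_nat (A 0%nat)) with (S (Z.to_nat n)) by (specialize (Hn0 0); simpl in Hn0; lia).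
      apply ev_primS with (r := Z.to_nat r).
      * pose proof (IH (RPrim f h, S k) _ _ _ Hc Hw Hr) as R. simpl in R.
        rewrite args_cons_fun in R. exact R.
      * pose proof (IH (h, S (S k)) _ _ _ (closed_T _ _ Hc (or_intror (or_introl eq_refl))) Hw1 Hh) as R.
        simpl in R. rewrite !args_cons_fun in R. exact R.
  - exact (mu_step_sound f k u y A Hc IH Hstep).
Qed.

Lemma steps_justified_sound :
  steps_justified P G M St T -> forall c u A y, In c T -> record_sound c u A y.
Proof.
  intros Hjust.
  assert (Hind : forall n, sound_below (Z.of_nat n)).
  { induction n as [|n IH]; intros c w A y Hc Hw Hrec.
    - destruct (record_nonneg _ _ _ _ _ _ _ _ _ Hrec). lia.
    - destruct (Z.lt_ge_cases w (Z.of_nat n)) as [Hlt|Hge]; [exact (IH c w A y Hc Hlt Hrec) |].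
      replace (Z.of_nat n) with w in IH by (destruct (record_nonneg _ _ _ _ _ _ _ _ _ Hrec); lia).
      destruct c as [g k]. apply (step_sound g k w y A Hc Hrec IH).
      intros m. destruct (Hjust w y m A) as (n' & r & W & V & H).
      exists n', r, W, V. exact (H (g, k) Hc Hrec). }
  intros c u A y Hc Hrec. destruct (record_nonneg _ _ _ _ _ _ _ _ _ Hrec) as [Hu _].
  apply (Hind (S (Z.to_nat u)) c u); [exact Hc | lia | exact Hrec].
Qed.

End Soundness.

Lemma run_form_sound P rho g : holds P rho (run_form g) -> reval g [Z.to_nat (rho 1)] 0.
Proof.
  rewrite holds_run_form. intros [Htop Hjust].
  apply (steps_justified_sound _ _ _ _ _ (subcalls_closed g 1) Hjust (g, 1) (rho 2)
           (fun _ => rho 1) 0%Z (subcalls_self g 1)).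
  rewrite call_index_subcalls_self. exact Htop.
Qed.

(** * Completeness *)

Definition entry : Type := (recf * nat) * list nat * nat.

Definition justified (e : entry) (L : list entry) : Prop :=
  let '((g, k), v, y) := e in
  match g with
  | RZero => y = 0
  | RSucc => k <> 0 /\ y = S (nth 0 v 0)
  | RProj i => i < k /\ y = nth i v 0
  | RComp f gs => exists zs, length zs = length gs /\
      (forall j, j < length gs -> In ((nth j gs RZero, k), v, nth j zs 0) L) /\
      In ((f, length gs), zs, y) L
  | RPrim f h => k <> 0 /\
      ((nth 0 v 0 = 0 /\ In ((f, k - 1), tl v, y) L) \/
       (exists n r, nth 0 v 0 = S n /\ In ((RPrim f h, k), n :: tl v, r) L /\
                    In ((h, S k), n :: r :: tl v, y) L))
  | RMu f => In ((f, S k), y :: v, 0) L /\ forall m, m < y -> exists z, In ((f, S k), m :: v, S z) L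
  end.

Lemma justified_mono e L L' : incl L L' -> justified e L -> justified e L'.
Proof.
  intros Hs. unfold incl in Hs. destruct e as [[[g k] v] y]. destruct g; simpl; auto.
  - intros (zs & H1 & H2 & H3). exists zs. repeat split; auto.
  - intros [Hk [[H1 H2]|(n & r & H1 & H2 & H3)]]; split; [exact Hk | left | exact Hk | right].
    + split; auto.
    + exists n, r. repeat split; auto.
  - intros [H1 H2]. split; auto. intros m Hm. destruct (H2 m Hm) as [z Hz]. eauto.
Qed.

Inductive derivation (T : list (recf * nat)) : list entry -> Prop :=
| derivation_nil : derivation T []
| derivation_cons c v y L :
    derivation T L -> justified (c, v, y) L -> In c T -> length v = snd c ->
    derivation T ((c, v, y) :: L).

Lemma derivation_app T L1 L2 : derivation T L1 -> derivation T L2 -> derivation T (L1 ++ L2).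
Proof.
  induction 1 as [|c v y L HL IHL Hj Hc Hv]; simpl; auto. intros H2.
  constructor; auto. eapply justified_mono; [| exact Hj]. apply incl_appl, incl_refl.
Qed.

Lemma derivation_gather T (Q : nat -> entry -> Prop) n :
  (forall m, m < n -> exists L e, derivation T L /\ In e L /\ Q m e) ->
  exists L, derivation T L /\ forall m, m < n -> exists e, In e L /\ Q m e.
Proof.
  induction n as [|n IH]; intros H; [exists []; split; [constructor | intros; lia] |].
  destruct IH as (L1 & D1 & H1); [intros m Hm; apply H; lia |].
  destruct (H n (Nat.lt_succ_diag_r n)) as (L2 & e & D2 & He & Hq).
  exists (L1 ++ L2). split; [apply derivation_app; assumption |].
  intros m Hm. destruct (Nat.eq_dec m n) as [->|Hne].
  - exists e. split; [apply in_or_app; right |]; assumption.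
  - destruct (H1 m ltac:(lia)) as (e' & He' & Hq'). exists e'.
    split; [apply in_or_app; left |]; assumption.
Qed.

Definition dummy_entry : entry := ((RZero, 0), [], 0).

Lemma nth_derivation T L i : derivation T L -> i < length L ->
  exists c v y, nth i L dummy_entry = (c, v, y) /\ In c T /\ length v = snd c /\
    justified (c, v, y) (skipn (S i) L).
Proof.
  intros HL. revert i. induction HL as [|c v y L HL IH Hj Hc Hv]; simpl; intros i Hi; [lia |].
  destruct i as [|i]; [exists c, v, y; auto | apply IH; lia].
Qed.

Section Derivations.

Variable T : list (recf * nat).

Hypothesis closed_T : closed_calls T.

Lemma derivation_push c v y L :
  derivation T L -> In c T -> length v = snd c -> justified (c, v, y) L ->
  exists L', derivation T L' /\ In (c, v, y) L'.
Proof. intros. exists ((c, v, y) :: L). split; [constructor; assumption | left; reflexivity]. Qed.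

Lemma mu_derivation f v n L0 :
  derivation T L0 -> In (RMu f, length v) T -> In ((f, S (length v)), n :: v, 0) L0 ->
  (forall m, m < n -> exists L z, derivation T L /\ In ((f, S (length v)), m :: v, S z) L) ->
  exists L, derivation T L /\ In ((RMu f, length v), v, n) L.
Proof.
  intros D0 Hin H0 Hm.
  destruct (derivation_gather T (fun m e => exists z, e = ((f, S (length v)), m :: v, S z)) n)
    as (L1 & D1 & H1).
  { intros m Hlt. destruct (Hm m Hlt) as (L & z & D & HL). exists L, ((f, S (length v)), m :: v, S z).
    split; [exact D | split; [exact HL | eauto]]. }
  apply (derivation_push _ _ _ (L0 ++ L1)); [apply derivation_app; auto | exact Hin | reflexivity |].
  split; [apply in_or_app; left; exact H0 |].
  intros m Hlt. destruct (H1 m Hlt) as (e & He & z & ->). exists z. apply in_or_app. right. exact He.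
Qed.

Fixpoint reval_derivation g v y (H : reval g v y) {struct H} :
  In (g, length v) T -> exists L, derivation T L /\ In ((g, length v), v, y) L
with revals_derivation gs v ys (H : revals gs v ys) {struct H} :
  (forall h, In h gs -> In (h, length v) T) ->
  exists L, derivation T L /\ length ys = length gs /\
    forall j, j < length gs -> In ((nth j gs RZero, length v), v, nth j ys 0) L.
Proof.
  - destruct H as [v|x v|i v Hi|f gs v ys z Hs Hf|f h v y Hf|f h n v r y Hr Hh|f v n H0 Hm];
      intros Hin;
      try (apply (derivation_push _ _ _ []); [constructor | exact Hin | reflexivity | simpl; auto; lia]).
    + destruct (revals_derivation _ _ _ Hs (fun h Hh => closed_T _ _ Hin (or_intror (in_map _ _ _ Hh))))
        as (L1 & D1 & Hlen & H1).
      assert (Hf' : In (f, length ys) T) by (rewrite Hlen; exact (closed_T _ _ Hin (or_introl eq_refl))).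
      destruct (reval_derivation _ _ _ Hf Hf') as (L2 & D2 & H2).
      apply (derivation_push _ _ _ (L1 ++ L2)); [apply derivation_app; auto | exact Hin | reflexivity |].
      exists ys. rewrite Hlen in H2. repeat split; [exact Hlen | |].
      * intros j Hj. apply in_or_app. left. auto.
      * apply in_or_app. right. exact H2.
    + assert (Hf' : In (f, length v) T)
        by (apply (closed_T _ _ Hin); left; simpl; rewrite Nat.sub_0_r; reflexivity).
      destruct (reval_derivation _ _ _ Hf Hf') as (L1 & D1 & H1).
      apply (derivation_push _ _ _ L1); [exact D1 | exact Hin | reflexivity |].
      simpl. rewrite Nat.sub_0_r. split; [lia | left; split; [reflexivity | exact H1]].
    + destruct (reval_derivation _ _ _ Hr Hin) as (L1 & D1 & H1).
      destruct (reval_derivation _ _ _ Hh (closed_T _ _ Hin (or_intror (or_introl eq_refl))))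
        as (L2 & D2 & H2).
      apply (derivation_push _ _ _ (L1 ++ L2)); [apply derivation_app; auto | exact Hin | reflexivity |].
      split; [simpl; lia | right]. exists n, r.
      split; [reflexivity | split; apply in_or_app; [left | right]; assumption].
    + pose proof (closed_T _ _ Hin (or_introl eq_refl)) as Hf.
      destruct (reval_derivation _ _ _ H0 Hf) as (L0 & D0 & H0').
      apply (mu_derivation f v n L0 D0 Hin H0'). intros m Hlt. destruct (Hm m Hlt) as [z Hz].
      destruct (reval_derivation _ _ _ Hz Hf) as (L & D & HL). eauto.
  - destruct H as [v|h gs v y ys Hh Hs]; intros Hin.
    + exists []. split; [constructor | split; [reflexivity | simpl; lia]].
    + destruct (reval_derivation _ _ _ Hh (Hin h (or_introl eq_refl))) as (L1 & D1 & H1).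
      destruct (revals_derivation _ _ _ Hs (fun h' H' => Hin h' (or_intror H')))
        as (L2 & D2 & Hlen & H2).
      exists (L1 ++ L2). split; [apply derivation_app; assumption | split; [simpl; lia |]].
      intros [|j] Hj; apply in_or_app; [left; exact H1 | right; apply H2; simpl in Hj; lia].
Qed.

End Derivations.

Lemma slot_inj (B X X' r r' : Z) :
  (0 <= r < B)%Z -> (0 <= r' < B)%Z -> (B * X + r = B * X' + r')%Z -> X = X' /\ r = r'.
Proof. intros. assert (X = X') by nia. subst. lia. Qed.

Lemma div_mod_inj (B x x' r r' : nat) : x * B + r = x' * B + r' -> r < B -> r' < B -> x = x' /\ r = r'.
Proof. intros. assert (x = x') by nia. subst. lia. Qed.

Lemma finite_choice {X} (x0 : X) (R : nat -> X -> Prop) n :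
  (forall j, j < n -> exists x, R j x) -> exists F : nat -> X, forall j, j < n -> R j (F j).
Proof.
  induction n as [|n IH]; intros H; [exists (fun _ => x0); intros; lia |].
  destruct IH as [F HF]; [intros j Hj; apply H; lia |].
  destruct (H n (Nat.lt_succ_diag_r n)) as [x Hx].
  exists (fun j => if j =? n then x else F j). intros j Hj.
  destruct (Nat.eqb_spec j n) as [->|]; [exact Hx | apply HF; lia].
Qed.

Lemma agree_below_nth_cons n x v (A : nat -> Z) :
  agree_below n A (fun j => Z.of_nat (nth j v 0)) ->
  agree_below (S n) (cons_fun (Z.of_nat x) A) (fun j => Z.of_nat (nth j (x :: v) 0)).
Proof. intros H [|j] Hj; [reflexivity | apply H; lia]. Qed.

Definition entry_cells (e : entry) : list (nat * nat) :=
  let '(_, v, y) := e in (0, 0) :: (1, y) :: map (fun j => (2 + j, nth j v 0)) (seq 0 (length v)).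

Lemma in_entry_cells c v y col a :
  In (col, a) (entry_cells (c, v, y)) <->
  (col = 0 /\ a = 0) \/ (col = 1 /\ a = y) \/ (exists j, j < length v /\ col = 2 + j /\ a = nth j v 0).
Proof.
  simpl. rewrite in_map_iff. setoid_rewrite in_seq. split.
  - intros [E|[E|(j & E & Hj)]]; inversion E; subst; [left | right; left | right; right; exists j];
      repeat split; lia.
  - intros [[-> ->]|[[-> ->]|(j & Hj & -> & ->)]]; auto.
    right. right. exists j. split; [reflexivity | lia].
Qed.

Section Encoding.

Variables (St : nat) (T : list (recf * nat)) (L : list entry).

Hypothesis St_wide : forall c, In c T -> snd c + 2 <= St.

Hypothesis derivation_L : derivation T L.

Local Notation M := (St * length T).

Definition entry_size (e : entry) : nat := snd e + list_sum (snd (fst e)).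

Definition value_bound : nat := S (list_sum (map entry_size L)).

(* Premises come later in [L], hence get smaller addresses; addresses are [value_bound] apart,
   so cells of different entries never collide. *)
Definition address (i : nat) : Z := Z.of_nat ((length L - i) * value_bound).

Definition entry_points (i : nat) : list Z :=
  let e := nth i L dummy_entry in
  map (fun '(col, a) =>
         Z.of_nat M * (address i + Z.of_nat a) + Z.of_nat (call_index (fst (fst e)) T * St + col))%Z
    (entry_cells e).

Definition encode : list Z := flat_map entry_points (seq 0 (length L)).

Lemma entry_values_lt i c v y : i < length L -> nth i L dummy_entry = (c, v, y) ->
  y < value_bound /\ forall j, nth j v 0 < value_bound.
Proof.
  intros Hi E. assert (Hin : In (c, v, y) L) by (rewrite <- E; apply nth_In, Hi).
  assert (Hle : entry_size (c, v, y) <= list_sum (map entry_size L)).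
  { clear -Hin. induction L as [|e L' IH]; [contradiction | simpl in *].
    destruct Hin as [->|Hin]; [lia | specialize (IH Hin); lia]. }
  unfold value_bound, entry_size in *. simpl in Hle. split; [lia |].
  intros j. enough (nth j v 0 <= list_sum v) by lia.
  clear. revert j. induction v as [|x v IH]; intros [|j]; simpl; try lia. specialize (IH j). lia.
Qed.

Lemma in_encode z :
  In z encode <-> exists i col a, i < length L /\ In (col, a) (entry_cells (nth i L dummy_entry)) /\
    z = (Z.of_nat M * (address i + Z.of_nat a) +
         Z.of_nat (call_index (fst (fst (nth i L dummy_entry))) T * St + col))%Z.
Proof.
  unfold encode, entry_points. rewrite in_flat_map. setoid_rewrite in_seq. setoid_rewrite in_map_iff.
  split.
  - intros (i & Hi & [col a] & <- & Hc). exists i, col, a. repeat split; [lia | exact Hc].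
  - intros (i & col & a & Hi & Hc & ->). exists i. split; [lia |]. exists (col, a). auto.
Qed.

Lemma address_inj i i' (a a' : Z) :
  i < length L -> i' < length L ->
  (0 <= a < Z.of_nat value_bound)%Z -> (0 <= a' < Z.of_nat value_bound)%Z ->
  (address i + a = address i' + a')%Z -> i = i' /\ a = a'.
Proof.
  unfold address. intros Hi Hi' Ha Ha' E. rewrite !Nat2Z.inj_mul, !(Z.mul_comm (Z.of_nat (_ - _))) in E.
  apply slot_inj in E as [E1 E2]; [split; [lia | exact E2] | assumption..].
Qed.

Lemma address_injective i i' : i < length L -> i' < length L -> address i = address i' -> i = i'.
Proof.
  intros Hi Hi' E.
  apply (address_inj i i' 0 0); [assumption | assumption | unfold value_bound; lia.. ].
Qed.

Lemma encode_point X t col :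
  t < length T -> col < St -> In (Z.of_nat M * X + Z.of_nat (t * St + col))%Z encode ->
  exists i c v y a, i < length L /\ nth i L dummy_entry = (c, v, y) /\ In c T /\ length v = snd c /\
    call_index c T = t /\ X = (address i + Z.of_nat a)%Z /\ In (col, a) (entry_cells (c, v, y)).
Proof.
  intros Ht Hcol Hz. apply in_encode in Hz as (i & col' & a & Hi & Hcell & E).
  destruct (nth_derivation T L i derivation_L Hi) as (c & v & y & Ei & Hc & Hv & _).
  rewrite Ei in Hcell, E. simpl in E.
  assert (Hcol' : col' < snd c + 2).
  { apply in_entry_cells in Hcell as [[-> _]|[[-> _]|(j & Hj & -> & _)]]; lia. }
  pose proof (St_wide c Hc). pose proof (proj1 (nth_call_index c T Hc)).
  assert (Hslot : forall t' col', t' < length T -> col' < St ->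
                   (0 <= Z.of_nat (t' * St + col') < Z.of_nat M)%Z)
    by (intros; split; [lia | apply Nat2Z.inj_lt; nia]).
  apply slot_inj in E as [EX Ecol]; [| apply Hslot; lia..].
  apply Nat2Z.inj, div_mod_inj in Ecol as [Et Ecol]; [| lia..].
  exists i, c, v, y, a. repeat split; [assumption.. | lia | exact EX | ].
  replace col with col' by lia. exact Hcell.
Qed.

Lemma record_of_entry i c v y :
  i < length L -> nth i L dummy_entry = (c, v, y) -> length v = snd c ->
  record encode (Z.of_nat value_bound) M St (call_index c T) (address i) (snd c)
    (fun j => Z.of_nat (nth j v 0)) (Z.of_nat y).
Proof.
  intros Hi E Hv. destruct (entry_values_lt i c v y Hi E) as [Hy Hvs].
  assert (Hcell : forall col a, In (col, a) (entry_cells (c, v, y)) ->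
            In (Z.of_nat M * (address i + Z.of_nat a) + Z.of_nat (call_index c T * St + col))%Z encode).
  { intros col a Hc. apply in_encode. exists i, col, a. rewrite E. auto. }
  split; [split |]; [apply Nat2Z.is_nonneg | |].
  - rewrite <- (Z.add_0_r (address i)), <- (Nat.add_0_r (_ * St)). apply (Hcell 0 0). left. reflexivity.
  - split; [split; [lia | apply (Hcell 1 y); right; left; reflexivity] |].
    intros j Hj. split; [specialize (Hvs j); lia |]. rewrite <- Nat.add_assoc.
    apply (Hcell (2 + j) (nth j v 0)), in_entry_cells. right. right. exists j. split; [lia | auto].
Qed.

Lemma entry_cell_lt i c v y col a :
  i < length L -> nth i L dummy_entry = (c, v, y) -> In (col, a) (entry_cells (c, v, y)) ->
  a < value_bound.
Proof.
  intros Hi E Hcell. destruct (entry_values_lt i c v y Hi E) as [Hy Hv].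
  apply in_entry_cells in Hcell as [[_ ->]|[[_ ->]|(j & _ & _ & ->)]]; [lia | exact Hy | apply Hv].
Qed.

Lemma encode_cell_readback i c v y col (a : Z) :
  i < length L -> nth i L dummy_entry = (c, v, y) -> In c T -> col < St ->
  (0 <= a < Z.of_nat value_bound)%Z ->
  In (Z.of_nat M * (address i + a) + Z.of_nat (call_index c T * St + col))%Z encode ->
  exists b, a = Z.of_nat b /\ In (col, b) (entry_cells (c, v, y)).
Proof.
  intros Hi E Hc Hcol Ha Hz.
  destruct (encode_point _ _ _ (proj1 (nth_call_index c T Hc)) Hcol Hz)
    as (i' & c' & v' & y' & b & Hi' & E' & Hc' & _ & Et & Eu & Hcell).
  pose proof (entry_cell_lt i' c' v' y' col b Hi' E' Hcell).
  apply address_inj in Eu as [<- Ea]; [| lia..].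
  rewrite E in E'. injection E' as <- <- <-. exists b. auto.
Qed.

Lemma record_readback c u A y :
  In c T -> record encode (Z.of_nat value_bound) M St (call_index c T) u (snd c) A y ->
  exists i v yv, i < length L /\ nth i L dummy_entry = (c, v, yv) /\ length v = snd c /\
    u = address i /\ y = Z.of_nat yv /\ agree_below (snd c) A (fun j => Z.of_nat (nth j v 0)).
Proof.
  intros Hc ((Hu & Hm) & (Hy & Hyin) & HA). pose proof (St_wide c Hc) as Hwide.
  rewrite <- (Nat.add_0_r (_ * St)) in Hm.
  destruct (encode_point u _ 0 (proj1 (nth_call_index c T Hc)) ltac:(lia) Hm)
    as (i & c0 & v & yv & a & Hi & E & Hc0 & Hv & Et & -> & Hcell).
  apply call_index_inj in Et; [subst c0 | assumption..].
  apply in_entry_cells in Hcell as [[_ ->]|[[? _]|(j & _ & ? & _)]]; [| lia..].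
  rewrite Z.add_0_r in *.
  exists i, v, yv. repeat split; try assumption.
  - destruct (encode_cell_readback i c v yv 1 y Hi E Hc ltac:(lia) Hy Hyin) as (b & -> & Hcell).
    apply in_entry_cells in Hcell as [[? _]|[[_ ->]|(j & _ & ? & _)]]; [lia | reflexivity | lia].
  - intros j Hj. destruct (HA j Hj) as [Ha Hin]. rewrite <- Nat.add_assoc in Hin.
    destruct (encode_cell_readback i c v yv (2 + j) (A j) Hi E Hc ltac:(lia) Ha Hin) as (b & -> & Hcell).
    apply in_entry_cells in Hcell as [[? _]|[[? _]|(j' & _ & ? & ->)]]; [lia.. |].
    replace j' with j by lia. reflexivity.
Qed.

Local Notation G := (Z.of_nat value_bound).

Lemma later_entry_record i c v y :
  i < length L -> In (c, v, y) (skipn (S i) L) ->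
  exists w, (w < address i)%Z /\
    record encode G M St (call_index c T) w (snd c) (fun j => Z.of_nat (nth j v 0)) (Z.of_nat y).
Proof.
  intros Hi Hin. destruct (In_nth _ _ dummy_entry Hin) as (k & Hk & E).
  rewrite length_skipn in Hk. rewrite nth_skipn in E.
  destruct (nth_derivation T L (S i + k) derivation_L ltac:(lia)) as (c' & v' & y' & E' & _ & Hv & _).
  rewrite E in E'. injection E' as <- <- <-.
  exists (address (S i + k)). split; [| apply record_of_entry; [lia | exact E | exact Hv]].
  unfold address, value_bound. apply Nat2Z.inj_lt. nia.
Qed.

Lemma comp_step_ok i f gs k v y A m :
  i < length L -> agree_below k A (fun j => Z.of_nat (nth j v 0)) ->
  justified ((RComp f gs, k), v, y) (skipn (S i) L) ->
  exists n r W V, step_ok encode G M St T (RComp f gs, k) (address i) (Z.of_nat y) m n r A W V.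
Proof.
  intros Hi HA (zs & Hzs & Hgs & Hf).
  destruct (finite_choice 0%Z (fun j w => (w < address i)%Z /\
              record encode G M St (call_index (nth j gs RZero, k) T) w k
                (fun j' => Z.of_nat (nth j' v 0)) (Z.of_nat (nth j zs 0))) (length gs))
    as [F HF].
  { intros j Hj. exact (later_entry_record i _ _ _ Hi (Hgs j Hj)). }
  destruct (later_entry_record i _ _ _ Hi Hf) as (w & Hw & Hrec).
  exists 0%Z, 0%Z, (fun j => if j <? length gs then F j else w), (fun j => Z.of_nat (nth j zs 0)).
  split; [intros j Hj | rewrite Nat.ltb_irrefl; split; [exact Hw | exact Hrec]].
  destruct (Nat.ltb_spec j (length gs)); [| lia]. destruct (HF j Hj) as [Hwj Hj'].
  split; [exact Hwj |]. eapply record_ext; [| exact Hj']. apply agree_below_sym, HA.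
Qed.

Lemma prim_step_ok i f h k v y A m :
  i < length L -> length v = k -> agree_below k A (fun j => Z.of_nat (nth j v 0)) ->
  justified ((RPrim f h, k), v, y) (skipn (S i) L) ->
  exists n r W V, step_ok encode G M St T (RPrim f h, k) (address i) (Z.of_nat y) m n r A W V.
Proof.
  intros Hi Hv HA [Hk Hcases]. destruct v as [|x v]; [simpl in Hv; lia |]. simpl in Hcases, Hv.
  assert (HA0 : A 0%nat = Z.of_nat x) by (apply HA; lia).
  assert (Hsh : agree_below (k - 1) (shift A) (fun j => Z.of_nat (nth j v 0)))
    by (intros j Hj; apply HA; lia).
  unfold step_ok. destruct (Nat.eqb_spec k 0) as [|_]; [lia |].
  destruct Hcases as [[-> Hf]|(n & r & -> & Hr & Hh)].
  - destruct (later_entry_record i _ _ _ Hi Hf) as (w & Hw & Hrec).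
    exists 0%Z, 0%Z, (fun _ => w), (fun _ => 0%Z). left.
    refine (conj HA0 (conj Hw _)). eapply record_ext; [| exact Hrec]. apply agree_below_sym, Hsh.
  - destruct (later_entry_record i _ _ _ Hi Hr) as (w0 & Hw0 & Hrec0).
    destruct (later_entry_record i _ _ _ Hi Hh) as (w1 & Hw1 & Hrec1).
    exists (Z.of_nat n), (Z.of_nat r), (fun j => if j =? 0 then w0 else w1), (fun _ => 0%Z). right.
    split; [lia |]. refine (conj Hw0 (conj _ (conj Hw1 _)));
      [eapply record_ext; [| exact Hrec0] | eapply record_ext; [| exact Hrec1]]; apply agree_below_sym.
    + replace k with (S (k - 1)) at 1 by lia. apply agree_below_nth_cons, Hsh.
    + replace (S k) with (S (S (k - 1))) at 1 by lia.
      apply agree_below_nth_cons, agree_below_nth_cons, Hsh.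
Qed.

Lemma mu_step_ok i f k v y A m :
  i < length L -> agree_below k A (fun j => Z.of_nat (nth j v 0)) ->
  justified ((RMu f, k), v, y) (skipn (S i) L) ->
  exists n r W V, step_ok encode G M St T (RMu f, k) (address i) (Z.of_nat y) m n r A W V.
Proof.
  intros Hi HA [H0 Hm].
  pose proof (fun x => agree_below_sym _ _ _ (agree_below_nth_cons k x v A HA)) as Hcons.
  destruct (later_entry_record i _ _ _ Hi H0) as (w0 & Hw0 & Hrec0).
  destruct (Z_le_dec 0 m); [destruct (Z_lt_dec m (Z.of_nat y)) |].
  - destruct (Hm (Z.to_nat m) ltac:(lia)) as [z Hz].
    destruct (later_entry_record i _ _ _ Hi Hz) as (w1 & Hw1 & Hrec1).
    exists 0%Z, 0%Z, (fun j => if j =? 0 then w0 else w1), (fun _ => Z.of_nat (S z)).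
    split; [split; [exact Hw0 | eapply record_ext; [apply Hcons | exact Hrec0]] |].
    intros _. refine (conj Hw1 (conj _ _)); [lia | eapply record_ext; [| exact Hrec1]].
    pose proof (Hcons (Z.to_nat m)) as Hc. rewrite Z2Nat.id in Hc by assumption. exact Hc.
  - exists 0%Z, 0%Z, (fun _ => w0), (fun _ => 0%Z).
    split; [split; [exact Hw0 | eapply record_ext; [apply Hcons | exact Hrec0]] | lia].
  - exists 0%Z, 0%Z, (fun _ => w0), (fun _ => 0%Z).
    split; [split; [exact Hw0 | eapply record_ext; [apply Hcons | exact Hrec0]] | lia].
Qed.

Lemma entry_step_ok i c v y A m :
  i < length L -> nth i L dummy_entry = (c, v, y) ->
  agree_below (snd c) A (fun j => Z.of_nat (nth j v 0)) ->
  exists n r W V, step_ok encode G M St T c (address i) (Z.of_nat y) m n r A W V.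
Proof.
  intros Hi E HA.
  destruct (nth_derivation T L i derivation_L Hi) as (c' & v' & y' & E' & _ & Hv & Hj).
  rewrite E in E'. injection E' as <- <- <-.
  destruct c as [[| |p|f gs|f h|f] k]; simpl in Hj, HA, Hv;
    [| | | eapply comp_step_ok | eapply prim_step_ok | eapply mu_step_ok]; try eassumption;
    exists 0%Z, 0%Z, (fun _ => 0%Z), (fun _ => 0%Z); unfold step_ok.
  - lia.
  - destruct Hj as [Hk ->]. destruct (Nat.eqb_spec k 0); [lia |]. rewrite HA by lia. lia.
  - destruct Hj as [Hp ->]. destruct (Nat.ltb_spec p k); [| lia]. rewrite HA by lia. reflexivity.
Qed.

Lemma encode_steps_justified : steps_justified encode G M St T.
Proof.
  (* By [record_readback] at most one call has a record at [u], so its witnesses serve every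
     clause. *)
  intros u y m A.
  destruct (classic (exists c, In c T /\ record encode G M St (call_index c T) u (snd c) A y))
    as [(c & Hc & Hrec)|Hnone].
  - destruct (record_readback c u A y Hc Hrec) as (i & v & yv & Hi & E & _ & -> & -> & HA).
    destruct (entry_step_ok i c v yv A m Hi E HA) as (n & r & W & V & Hok).
    exists n, r, W, V. intros c' Hc' Hrec'.
    destruct (record_readback c' _ _ _ Hc' Hrec') as (i' & v' & yv' & Hi' & E' & _ & Ei & _).
    apply address_injective in Ei as <-; [| assumption..].
    rewrite E in E'. injection E' as -> _ _. exact Hok.
  - exists 0%Z, 0%Z, (fun _ => 0%Z), (fun _ => 0%Z). intros c Hc Hrec. exfalso. eauto.
Qed.

End Encoding.

Lemma run_form_complete g x :
  reval g [x] 0 -> exists P rho, rho 1 = Z.of_nat x /\ holds P rho (run_form g).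
Proof.
  intros H. set (T := subcalls g 1). set (St := width T).
  assert (Hwide : forall c, In c T -> snd c + 2 <= St) by (intros c; apply width_bound).
  destruct (reval_derivation T (subcalls_closed g 1) g [x] 0 H (subcalls_self g 1))
    as (L & HL & Hin).
  destruct (In_nth L _ dummy_entry Hin) as (i & Hi & E).
  exists (encode St T L),
    (fun n => match n with
              | 0 => Z.of_nat (value_bound L) | 1 => Z.of_nat x | 2 => address L i | _ => 0%Z
              end).
  split; [reflexivity |]. apply holds_run_form. split; [| apply encode_steps_justified; assumption].
  pose proof (record_of_entry St T L i _ _ _ Hi E eq_refl) as Htop.
  rewrite (call_index_subcalls_self g 1 : call_index (g, length [x]) T = 0) in Htop.
  eapply record_ext; [| exact Htop].
  intros [|j] Hj; [reflexivity | simpl in Hj; lia].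
Qed.

(** * Undecidability *)

Lemma sat_pin_input_run_form g x : sat (pin_input x (run_form g)) <-> reval g [x] 0.
Proof.
  unfold sat, pin_input. cbn [holds eval_term]. setoid_rewrite eval_num. split.
  - intros (rho & P & Hx & Hrun). pose proof (run_form_sound P rho g Hrun) as H.
    rewrite Hx, Nat2Z.id in H. exact H.
  - intros H. destruct (run_form_complete g x H) as (P & rho & Hx & Hrun). exists rho, P. auto.
Qed.

Theorem theorem3 :
  ~ exists f : recf,
      forall p : form, in_class p ->
        (sat p -> reval f [code_form p] 1) /\
        (~ sat p -> reval f [code_form p] 0).
Proof.
  intros [f Hf].
  set (d := RComp f [rcode_pin]).
  set (th := run_form d).
  set (F := pin_input (code_form th) th).
  assert (Hd : forall y, reval f [code_form F] y -> reval d [code_form th] y)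
    by (intros y; apply reval_comp1, reval_rcode_pin).
  destruct (Hf F (pin_input_in_class _ _)) as [Hsat Hunsat].
  assert (Hno : ~ sat F).
  { intros HF. pose proof (proj1 (sat_pin_input_run_form d _) HF) as H0.
    pose proof (reval_functional _ _ _ (Hd _ (Hsat HF)) _ H0). discriminate. }
  apply Hno, sat_pin_input_run_form, Hd, Hunsat, Hno.
Qed.
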